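(* Let $L$ be a language, $\downarrow_1,\downarrow_2$ compilers from $L$ to $L$, $\sim_1,\sim_2\subseteq\mathrm{Tr}_L\times\mathrm{Tr}_L$ trace relations and $C_1,C_2$ classes of $L$-properties. Assume $\mathrm{RTP}^{\sigma}(\downarrow_1,C_1,\sim_1)$ and $\mathrm{RTP}^{\sigma}(\downarrow_2,C_2,\sim_2)$; that $\sim_1$ is well-formed for $C_2$ and $\sim_2$ is well-formed for $C_1$; and that $\tilde\sigma_{\sim_2}(C_1)=C_1$ and $\tilde\sigma_{\sim_1}(C_2)=C_2$. Then $\mathrm{RTP}^{\sigma}(p\mapsto\downarrow_2(\downarrow_1(p)),\ C_1\cap C_2,\ \sim_1\bullet\sim_2)$ and $\mathrm{RTP}^{\sigma}(p\mapsto\downarrow_1(\downarrow_2(p)),\ C_2\cap C_1,\ \sim_2\bullet\sim_1)$.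
   Context: A language $L$ consists of: a set of partial programs (components), a set of contexts, a set of whole programs, a partial linking operation $\mathrm{link}(c,p)$ producing a whole program from a context $c$ and a component $p$, a set $\mathrm{Tr}_L$ of traces, and an execution relation $W\Downarrow t$ meaning that whole program $W$ terminates producing trace $t$. A property is a set $\pi\subseteq\mathrm{Tr}_L$; a class is a set of properties. $W\models\pi$ iff every $t$ with $W\Downarrow t$ lies in $\pi$. $p\models_R\pi$ iff for every context $c$ and whole program $W$ with $\mathrm{link}(c,p)=W$, $W\models\pi$. A compiler from $L_S$ to $L_T$ is a function from $L_S$-components to $L_T$-components. For $\sim\subseteq\mathrm{Tr}_S\times\mathrm{Tr}_T$, $\sigma_\sim(\pi_T)=\{t_S\mid\forall t_T,\ t_S\sim t_T\Rightarrow t_T\in\pi_T\}$ and $\tilde\sigma_\sim(C_T)=\{\sigma_\sim(\pi)\mid\pi\in C_T\}$. $\mathrm{RTP}^{\sigma}(\downarrow,C_T,\sim)$ holds iff for every $\pi_T\in C_T$ and every $L_S$-component $p$, if $p\models_R\sigma_\sim(\pi_T)$ then $\downarrow(p)\models_R\pi_T$. A relation $\sim$ is well-formed for $C_T$ iff for all $\pi_T\in C_T$, $\sigma_\sim(\pi_T)\in\tilde\sigma_\sim(C_T)$. $t\,(\sim_1\bullet\sim_2)\,t''$ iff there exists $t'$ with $t\sim_1 t'$ and $t'\sim_2 t''$. *)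

Record Language := {
  comp : Type;
  ctx : Type;
  whole : Type;
  trace : Type;
  link : ctx -> comp -> option whole;
  exec : whole -> trace -> Prop
}.

Definition prop (L : Language) := trace L -> Prop.
Definition class (L : Language) := prop L -> Prop.

Definition sat (L : Language) (W : whole L) (pi : prop L) : Prop :=
  forall t, exec L W t -> pi t.

Definition rsat (L : Language) (p : comp L) (pi : prop L) : Prop :=
  forall (c : ctx L) (W : whole L), link L c p = Some W -> sat L W pi.

Definition compiler (LS LT : Language) := comp LS -> comp LT.

Definition sigma (LS LT : Language) (rel : trace LS -> trace LT -> Prop)
  (piT : prop LT) : prop LS :=
  fun tS => forall tT, rel tS tT -> piT tT.

Definition sigma_tilde (LS LT : Language) (rel : trace LS -> trace LT -> Prop)
  (CT : class LT) : class LS :=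
  fun piS => exists piT, CT piT /\ piS = sigma LS LT rel piT.

Definition RTP_sigma (LS LT : Language) (cmp : compiler LS LT) (CT : class LT)
  (rel : trace LS -> trace LT -> Prop) : Prop :=
  forall (piT : prop LT) (p : comp LS),
    CT piT -> rsat LS p (sigma LS LT rel piT) -> rsat LT (cmp p) piT.

Definition well_formed (LS LT : Language) (rel : trace LS -> trace LT -> Prop)
  (CT : class LT) : Prop :=
  forall piT, CT piT -> sigma_tilde LS LT rel CT (sigma LS LT rel piT).

Definition rel_comp {A B C : Type} (r1 : A -> B -> Prop) (r2 : B -> C -> Prop)
  : A -> C -> Prop :=
  fun a c => exists b, r1 a b /\ r2 b c.

Definition class_inter (L : Language) (C1 C2 : class L) : class L :=
  fun pi => C1 pi /\ C2 pi.

Definition class_eq (L : Language) (C1 C2 : class L) : Prop :=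
  forall pi, C1 pi <-> C2 pi.


(* The key observation is that the property
   pulled back along a composed relation is the iterated pull-back:
   sigma_{r1 . r2}(pi) = sigma_{r1}(sigma_{r2}(pi)).  Hence, if pi lies in
   the class preserved by the second compiler and its pull-back
   sigma_{r2}(pi) lies in the class preserved by the first, robust
   satisfaction of sigma_{r1 . r2}(pi) by a source component transports
   first to its intermediate image and then to its final image.
   Corollary 3.2 instantiates this twice with L1 = L2 = L3 = L. *)

Lemma sigma_rel_comp (L1 L2 L3 : Language)
  (r1 : trace L1 -> trace L2 -> Prop) (r2 : trace L2 -> trace L3 -> Prop)
  (pi : prop L3) (t : trace L1) :
  sigma L1 L2 r1 (sigma L2 L3 r2 pi) t <-> sigma L1 L3 (rel_comp r1 r2) pi t.
Proof.
  split.
  - intros Hs t3 [t2 [H12 H23]]. exact (Hs t2 H12 t3 H23).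
  - intros Hs t2 H12 t3 H23. apply Hs. exists t2. split; assumption.
Qed.

Lemma rsat_mono (L : Language) (p : comp L) (pi pi' : prop L) :
  (forall t, pi t -> pi' t) -> rsat L p pi -> rsat L p pi'.
Proof.
  intros Himp Hp c W HW t Ht. exact (Himp t (Hp c W HW t Ht)).
Qed.

Lemma RTP_sigma_compose (L1 L2 L3 : Language)
  (c1 : compiler L1 L2) (c2 : compiler L2 L3)
  (r1 : trace L1 -> trace L2 -> Prop) (r2 : trace L2 -> trace L3 -> Prop)
  (C1 : class L2) (C2 CT : class L3) :
  RTP_sigma L1 L2 c1 C1 r1 ->
  RTP_sigma L2 L3 c2 C2 r2 ->
  (forall pi, CT pi -> C2 pi) ->
  (forall pi, sigma_tilde L2 L3 r2 CT pi -> C1 pi) ->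
  RTP_sigma L1 L3 (fun p => c2 (c1 p)) CT (rel_comp r1 r2).
Proof.
  intros H1 H2 HC2 HC1 pi p Hpi Hp.
  apply H2; [exact (HC2 pi Hpi) |].
  apply H1.
  - apply HC1. exists pi. split; [exact Hpi | reflexivity].
  - apply (rsat_mono L1 p _ _ (fun t => proj2 (sigma_rel_comp L1 L2 L3 r1 r2 pi t))).
    exact Hp.
Qed.

Lemma RTP_sigma_compose_inter (L : Language) (c1 c2 : compiler L L)
  (r1 r2 : trace L -> trace L -> Prop) (C1 C2 : class L) :
  RTP_sigma L L c1 C1 r1 ->
  RTP_sigma L L c2 C2 r2 ->
  class_eq L (sigma_tilde L L r2 C1) C1 ->
  RTP_sigma L L (fun p => c2 (c1 p)) (class_inter L C1 C2) (rel_comp r1 r2).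
Proof.
  intros H1 H2 Hfix.
  apply (RTP_sigma_compose L L L c1 c2 r1 r2 C1 C2); [exact H1 | exact H2 | |].
  - intros pi [_ HC2]. exact HC2.
  - intros pi [pi' [[HC1 _] ->]].
    apply Hfix. exists pi'. split; [exact HC1 | reflexivity].
Qed.

Theorem corollary3p2 (L : Language) (c1 c2 : compiler L L)
  (r1 r2 : trace L -> trace L -> Prop) (C1 C2 : class L) :
  RTP_sigma L L c1 C1 r1 ->
  RTP_sigma L L c2 C2 r2 ->
  well_formed L L r1 C2 ->
  well_formed L L r2 C1 ->
  class_eq L (sigma_tilde L L r2 C1) C1 ->
  class_eq L (sigma_tilde L L r1 C2) C2 ->
  RTP_sigma L L (fun p => c2 (c1 p)) (class_inter L C1 C2) (rel_comp r1 r2) /\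
  RTP_sigma L L (fun p => c1 (c2 p)) (class_inter L C2 C1) (rel_comp r2 r1).
Proof.
  intros H1 H2 _ _ Hfix1 Hfix2. split.
  - exact (RTP_sigma_compose_inter L c1 c2 r1 r2 C1 C2 H1 H2 Hfix1).
  - exact (RTP_sigma_compose_inter L c2 c1 r2 r1 C2 C1 H2 H1 Hfix2).
Qed.
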